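(* Let $r\ge 2$ be an even integer and let $u(x,t)$ be a sufficiently smooth (e.g. $C^3$) function on $[a,b]\times I$, $I$ a time interval, with $u(a,t)=u(b,t)=0$. Then the following are equivalent: (i) $u$ satisfies $$\big(|u_x|^{r-2}u_x\big)_{xt}+\big(|u_x|^{r-2}u_x\big)_x u_x+\Big(\big(|u_x|^{r-2}u_x\big)_x u\Big)_x=0;$$ (ii) there is a function $c(t)$ such that $$|u_x|^{r-2}u_{xt}+\frac1r|u_x|^r+|u_x|^{r-2}u_{xx}u=c(t);$$ (iii) there is a function $c(t)$ such that $$\big(|u_x|^{r-2}u_x\big)_t+\big(|u_x|^{r-2}u\,u_x\big)_x=\frac1r|u_x|^r+c(t).$$ (The functions $c(t)$ in (ii) and (iii) need not coincide.)
   Context: Subscripts denote partial derivatives. Equation (i) is called the $r$-Hunter-Saxton equation on $[a,b]$ with boundary conditions $u(a)=u(b)=0$. For $r=2$, (iii) reduces to the Hunter-Saxton equation $(u_t+uu_x)_x=\frac12u_x^2$ (up to the function $c(t)$). *)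

From Stdlib Require Import Reals Lra Lia List.
From Coquelicot Require Import Coquelicot.
Open Scope R_scope.

Definition dx (f : R -> R -> R) : R -> R -> R :=
  fun x t => Derive (fun y => f y t) x.

Definition dt (f : R -> R -> R) : R -> R -> R :=
  fun x t => Derive (fun s => f x s) t.

Inductive dir := DX | DT.

(* iterated partial derivative; the head of the list is applied last *)
Fixpoint pd (l : list dir) (f : R -> R -> R) : R -> R -> R :=
  match l with
  | nil => f
  | DX :: l' => dx (pd l' f)
  | DT :: l' => dt (pd l' f)
  end.

Definition C3_on (U : R * R -> Prop) (f : R -> R -> R) : Prop :=
  forall (l : list dir) (x t : R), U (x, t) ->
    ((length l <= 3)%nat ->
       continuous (fun p : R * R => pd l f (fst p) (snd p)) (x, t)) /\
    ((length l < 3)%nat ->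
       ex_derive (fun y => pd l f y t) x /\ ex_derive (fun s => pd l f x s) t).

Definition is_interval (I : R -> Prop) : Prop :=
  forall s1 s2 s, I s1 -> I s2 -> s1 <= s <= s2 -> I s.

Definition wfun (r : nat) (u : R -> R -> R) : R -> R -> R :=
  fun x t => Rabs (dx u x t) ^ (r - 2) * dx u x t.

(* For r = n + 2 with n even, |u_x|^(r-2) = u_x^n, so w = u_x^(n+1) and every expression
   is a polynomial in u and its partial derivatives. Let E be the left-hand side of (ii).
   Using u_xxt = u_xtx (Schwarz), a direct computation gives
     left-hand side of (i)   = (r - 1) E_x,
     left-hand side of (iii) = (r - 1) E + |u_x|^r / r.
   Hence (i) says that E is constant in x on [a, b] (mean value theorem; conversely E_x
   vanishes also at the endpoints since a < b), and (ii) <-> (iii) by rescaling c by r - 1. *)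

From Stdlib Require Import Reals Lra Lia List.
From Coquelicot Require Import Coquelicot.
Open Scope R_scope.

Lemma pow_Rabs_even (z : R) (m : nat) : Nat.Even m -> Rabs z ^ m = z ^ m.
Proof. intros [k ->]. rewrite !pow_mult, pow2_abs. reflexivity. Qed.

Lemma Derive_eq0_of_const_on (f : R -> R) (a b x : R) :
  a < b -> a <= x <= b -> ex_derive f x ->
  (forall y, a <= y <= b -> f y = f x) -> Derive f x = 0.
Proof.
  intros Hab Hx Hd Hconst.
  pose proof (proj1 (is_derive_Reals _ _ _) (Derive_correct _ _ Hd)) as Hlim.
  destruct (Req_dec (Derive f x) 0) as [|Hnz]; [assumption | exfalso].
  destruct (Hlim _ (Rabs_pos_lt _ Hnz)) as [delta Hdelta].
  pose proof (cond_pos delta) as Hdelta0.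
  set (d := Rmin (delta / 2) ((b - a) / 2)).
  assert (Hd0 : 0 < d) by (apply Rmin_pos; lra).
  assert (Hd1 : d <= delta / 2) by apply Rmin_l.
  assert (Hd2 : d <= (b - a) / 2) by apply Rmin_r.
  assert (Hh : exists h, h <> 0 /\ Rabs h < delta /\ a <= x + h <= b).
  { destruct (Rle_dec (x + d) b).
    - exists d. rewrite Rabs_right by lra. repeat split; lra.
    - exists (- d). rewrite Rabs_Ropp, Rabs_right by lra. repeat split; lra. }
  destruct Hh as [h [Hh0 [Hhdelta Hhab]]].
  specialize (Hdelta h Hh0 Hhdelta).
  rewrite (Hconst (x + h) Hhab), Rminus_diag, Rdiv_0_l, Rminus_0_l, Rabs_Ropp in Hdelta.
  lra.
Qed.

Lemma const_on_of_Derive_eq0 (f : R -> R) (a x : R) : a <= x ->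
  (forall y, a <= y <= x -> ex_derive f y) ->
  (forall y, a <= y <= x -> Derive f y = 0) -> f x = f a.
Proof.
  intros Hax Hd H0.
  destruct (Req_dec x a) as [-> | Hxa]; [reflexivity |].
  destruct (MVT_cor2 f (Derive f) a x) as [c [Hmvt Hc]]; [lra | |].
  - intros c Hc. apply is_derive_Reals, Derive_correct, Hd, Hc.
  - rewrite H0 in Hmvt by lra. lra.
Qed.

Lemma dx_eq0_iff_const_in_x (F : R -> R -> R) (a b : R) (I : R -> Prop) :
  a < b -> (forall x t, a <= x <= b -> I t -> ex_derive (fun y => F y t) x) ->
  (forall x t, a <= x <= b -> I t -> dx F x t = 0) <->
  (exists c : R -> R, forall x t, a <= x <= b -> I t -> F x t = c t).
Proof.
  intros Hab Hd. split.
  - intros H0. exists (fun t => F a t). intros x t Hx Ht.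
    apply (const_on_of_Derive_eq0 (fun y => F y t)); [lra | |]; intros y Hy.
    + apply Hd; [lra | exact Ht].
    + apply H0; [lra | exact Ht].
  - intros [c Hc] x t Hx Ht. apply (Derive_eq0_of_const_on _ a b); auto.
    intros y Hy. rewrite !Hc by assumption. reflexivity.
Qed.

Section C3Calculus.

Variables (U : R * R -> Prop) (u : R -> R -> R).
Hypotheses (HO : open U) (HC : C3_on U u).

Lemma open_locally_2d (x t : R) : U (x, t) -> locally_2d (fun y s => U (y, s)) x t.
Proof.
  intros HU. apply locally_2d_locally.
  apply (filter_imp U); [intros [y s] Hys; exact Hys | exact (HO _ HU)].
Qed.

Lemma C3_ex_derive_x (l : list dir) (x t : R) : U (x, t) -> (length l < 3)%nat ->
  ex_derive (fun y => pd l u y t) x.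
Proof. intros HU Hl. exact (proj1 (proj2 (HC l x t HU) Hl)). Qed.

Lemma C3_ex_derive_t (l : list dir) (x t : R) : U (x, t) -> (length l < 3)%nat ->
  ex_derive (fun s => pd l u x s) t.
Proof. intros HU Hl. exact (proj2 (proj2 (HC l x t HU) Hl)). Qed.

Lemma C3_continuous (l : list dir) (x t : R) : U (x, t) -> (length l <= 3)%nat ->
  continuity_2d_pt (pd l u) x t.
Proof. intros HU Hl. apply continuity_2d_pt_filterlim, (proj1 (HC l x t HU) Hl). Qed.

Lemma C3_dt_dx_comm (x t : R) : U (x, t) -> dt (dx (dx u)) x t = dx (dt (dx u)) x t.
Proof.
  intros HU. symmetry. apply (Schwarz (dx u)).
  - apply (locally_2d_impl (fun y s => U (y, s))); [| exact (open_locally_2d x t HU)].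
    apply locally_2d_forall. intros y s Hys. repeat split.
    + exact (C3_ex_derive_x (DX :: nil) y s Hys ltac:(simpl; lia)).
    + exact (C3_ex_derive_t (DX :: nil) y s Hys ltac:(simpl; lia)).
    + exact (C3_ex_derive_x (DT :: DX :: nil) y s Hys ltac:(simpl; lia)).
    + exact (C3_ex_derive_t (DX :: DX :: nil) y s Hys ltac:(simpl; lia)).
  - exact (C3_continuous (DX :: DT :: DX :: nil) x t HU ltac:(simpl; lia)).
  - exact (C3_continuous (DT :: DX :: DX :: nil) x t HU ltac:(simpl; lia)).
Qed.

End C3Calculus.

Ltac pd_index f :=
  lazymatch f with
  | dx ?g => let l := pd_index g in constr:(DX :: l)
  | dt ?g => let l := pd_index g in constr:(DT :: l)
  | _ => constr:(@nil dir)
  end.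

Ltac C3_derivable HC HU :=
  repeat split;
  lazymatch goal with
  | |- ex_derive (fun y => ?f y ?t) ?x =>
      let l := pd_index f in exact (C3_ex_derive_x _ _ HC l x t HU ltac:(simpl; lia))
  | |- ex_derive (fun s => ?f ?x s) ?t =>
      let l := pd_index f in exact (C3_ex_derive_t _ _ HC l x t HU ltac:(simpl; lia))
  end.

(* auto_derive leaves the factor INR (S n) of d/dz z ^ S n unfolded to a match on n. *)
Ltac derivative_field :=
  unfold dx, dt;
  repeat change (match ?n with 0%nat => 1 | S _ => INR ?n + 1 end) with (INR (S n));
  rewrite <- ?tech_pow_Rmult, ?S_INR; field.

Definition lhs_ii (r : nat) (u : R -> R -> R) (x t : R) : R :=
  Rabs (dx u x t) ^ (r - 2) * dt (dx u) x t + / INR r * Rabs (dx u x t) ^ r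
  + Rabs (dx u x t) ^ (r - 2) * dx (dx u) x t * u x t.

Section EvenExponent.

Variables (n : nat) (U : R * R -> Prop) (u : R -> R -> R).
Hypotheses (Hn : Nat.Even n) (HO : open U) (HC : C3_on U u).

Let r := S (S n).
Let Hr : Nat.Even r := proj2 (Nat.Even_succ_succ n) Hn.

Lemma wfun_even (x t : R) : wfun r u x t = dx u x t ^ S n.
Proof.
  unfold wfun, r. replace (S (S n) - 2)%nat with n by lia.
  rewrite pow_Rabs_even by exact Hn. simpl. ring.
Qed.

Lemma lhs_ii_even (x t : R) : lhs_ii r u x t =
  dx u x t ^ n * dt (dx u) x t + / INR r * dx u x t ^ r + dx u x t ^ n * dx (dx u) x t * u x t.
Proof.
  unfold lhs_ii, r. replace (S (S n) - 2)%nat with n by lia.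
  rewrite !pow_Rabs_even by assumption. reflexivity.
Qed.

Lemma is_derive_lhs_ii_x (x t : R) : U (x, t) ->
  is_derive (fun y => lhs_ii r u y t) x
   (INR n * dx (dx u) x t * dx u x t ^ pred n * dt (dx u) x t
    + dx u x t ^ n * dx (dt (dx u)) x t + dx (dx u) x t * dx u x t ^ S n
    + (INR n * dx (dx u) x t * dx u x t ^ pred n * dx (dx u) x t
       + dx u x t ^ n * dx (dx (dx u)) x t) * u x t
    + dx u x t ^ n * dx (dx u) x t * dx u x t).
Proof.
  intros HU. apply (is_derive_ext (fun y => dx u y t ^ n * dt (dx u) y t
    + / INR r * dx u y t ^ r + dx u y t ^ n * dx (dx u) y t * u y t)).
  { intros y. symmetry. apply lhs_ii_even. }
  unfold r. auto_derive.
  - C3_derivable HC HU.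
  - derivative_field. pose proof (pos_INR n). lra.
Qed.

Lemma dx_wfun (x t : R) : U (x, t) ->
  dx (wfun r u) x t = INR (S n) * dx (dx u) x t * dx u x t ^ n.
Proof.
  intros HU. unfold dx at 1.
  rewrite (Derive_ext _ (fun y => dx u y t ^ S n)) by (intros y; apply wfun_even).
  apply is_derive_unique. auto_derive.
  - C3_derivable HC HU.
  - derivative_field.
Qed.

Lemma dt_dx_wfun (x t : R) : U (x, t) ->
  dt (dx (wfun r u)) x t = INR (S n) * (dt (dx (dx u)) x t * dx u x t ^ n
     + dx (dx u) x t * (INR n * dt (dx u) x t * dx u x t ^ pred n)).
Proof.
  intros HU. unfold dt at 1.
  rewrite (Derive_ext_loc _ (fun s => INR (S n) * dx (dx u) x s * dx u x s ^ n)).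
  2: { apply (filter_imp (fun s => U (x, s))); [intros s; apply dx_wfun |].
       exact (locally_2d_1d_const_x _ _ _ (open_locally_2d U HO x t HU)). }
  apply is_derive_unique. auto_derive.
  - C3_derivable HC HU.
  - derivative_field.
Qed.

Lemma dx_dx_wfun_mul (x t : R) : U (x, t) ->
  dx (fun y s => dx (wfun r u) y s * u y s) x t =
  INR (S n) * ((dx (dx (dx u)) x t * dx u x t ^ n
     + dx (dx u) x t * (INR n * dx (dx u) x t * dx u x t ^ pred n)) * u x t
     + dx (dx u) x t * dx u x t ^ n * dx u x t).
Proof.
  intros HU. unfold dx at 1.
  rewrite (Derive_ext_loc _ (fun y => INR (S n) * dx (dx u) y t * dx u y t ^ n * u y t)).
  2: { apply (filter_imp (fun y => U (y, t))).
       - intros y Hy. rewrite dx_wfun by exact Hy. reflexivity.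
       - exact (locally_2d_1d_const_y _ _ _ (open_locally_2d U HO x t HU)). }
  apply is_derive_unique. auto_derive.
  - C3_derivable HC HU.
  - derivative_field.
Qed.

Lemma dt_wfun (x t : R) : U (x, t) ->
  dt (wfun r u) x t = INR (S n) * dt (dx u) x t * dx u x t ^ n.
Proof.
  intros HU. unfold dt at 1.
  rewrite (Derive_ext _ (fun s => dx u x s ^ S n)) by (intros s; apply wfun_even).
  apply is_derive_unique. auto_derive.
  - C3_derivable HC HU.
  - derivative_field.
Qed.

Lemma dx_flux (x t : R) : U (x, t) ->
  dx (fun y s => Rabs (dx u y s) ^ (r - 2) * u y s * dx u y s) x t =
  INR (S n) * dx (dx u) x t * dx u x t ^ n * u x t + dx u x t ^ S n * dx u x t.
Proof.
  intros HU. unfold dx at 1, r. replace (S (S n) - 2)%nat with n by lia.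
  rewrite (Derive_ext _ (fun y => dx u y t ^ S n * u y t)).
  2: { intros y. rewrite pow_Rabs_even by exact Hn. simpl. ring. }
  apply is_derive_unique. auto_derive.
  - C3_derivable HC HU.
  - derivative_field.
Qed.

Lemma lhs_i_eq_dx_lhs_ii (x t : R) : U (x, t) ->
  dt (dx (wfun r u)) x t + dx (wfun r u) x t * dx u x t
  + dx (fun y s => dx (wfun r u) y s * u y s) x t
  = INR (S n) * dx (lhs_ii r u) x t.
Proof.
  intros HU.
  rewrite (is_derive_unique _ _ _ (is_derive_lhs_ii_x x t HU) : dx (lhs_ii r u) x t = _).
  rewrite dt_dx_wfun, dx_dx_wfun_mul, dx_wfun, (C3_dt_dx_comm U u HO HC) by assumption.
  rewrite <- !tech_pow_Rmult. ring.
Qed.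

Lemma lhs_iii_eq_lhs_ii (x t : R) : U (x, t) ->
  dt (wfun r u) x t + dx (fun y s => Rabs (dx u y s) ^ (r - 2) * u y s * dx u y s) x t
  = / INR r * Rabs (dx u x t) ^ r + INR (S n) * lhs_ii r u x t.
Proof.
  intros HU.
  rewrite dt_wfun, dx_flux, lhs_ii_even, pow_Rabs_even by assumption.
  unfold r. rewrite <- !tech_pow_Rmult, !S_INR. field.
  pose proof (pos_INR n). lra.
Qed.

End EvenExponent.

Theorem mainTheorem1 (r : nat) (a b : R) (I : R -> Prop) (u : R -> R -> R)
  (U : R * R -> Prop) :
  (2 <= r)%nat -> Nat.Even r ->
  a < b -> is_interval I ->
  open U -> (forall x t, a <= x <= b -> I t -> U (x, t)) -> C3_on U u ->
  (forall t, I t -> u a t = 0 /\ u b t = 0) ->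
  let w := wfun r u in
  ( (forall x t, a <= x <= b -> I t ->
       dt (dx w) x t + dx w x t * dx u x t
       + dx (fun y s => dx w y s * u y s) x t = 0)
    <->
    (exists c : R -> R, forall x t, a <= x <= b -> I t ->
       Rabs (dx u x t) ^ (r - 2) * dt (dx u) x t
       + / INR r * Rabs (dx u x t) ^ r
       + Rabs (dx u x t) ^ (r - 2) * dx (dx u) x t * u x t = c t) )
  /\
  ( (exists c : R -> R, forall x t, a <= x <= b -> I t ->
       Rabs (dx u x t) ^ (r - 2) * dt (dx u) x t
       + / INR r * Rabs (dx u x t) ^ r
       + Rabs (dx u x t) ^ (r - 2) * dx (dx u) x t * u x t = c t)
    <->
    (exists c : R -> R, forall x t, a <= x <= b -> I t ->
       dt w x t
       + dx (fun y s => Rabs (dx u y s) ^ (r - 2) * u y s * dx u y s) x t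
       = / INR r * Rabs (dx u x t) ^ r + c t) ).
Proof.
  intros Hr Hn Hab _ HO HUab HC _ w. subst w.
  destruct r as [| [| n]]; [lia | lia |].
  rewrite Nat.Even_succ_succ in Hn.
  assert (HSn : INR (S n) <> 0) by (apply not_0_INR; lia).
  assert (Hd : forall x t, a <= x <= b -> I t -> ex_derive (fun y => lhs_ii (S (S n)) u y t) x)
    by (intros x t Hx Ht; eexists; apply (is_derive_lhs_ii_x n U); auto).
  split.
  - rewrite <- (dx_eq0_iff_const_in_x (lhs_ii (S (S n)) u) a b I Hab Hd).
    split; intros H x t Hx Ht; specialize (H x t Hx Ht);
      rewrite (lhs_i_eq_dx_lhs_ii n U) in * by auto.
    + apply (Rmult_eq_reg_l (INR (S n))); [lra | exact HSn].
    + rewrite H. ring.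
  - split; intros [c H].
    + exists (fun t => INR (S n) * c t). intros x t Hx Ht.
      rewrite (lhs_iii_eq_lhs_ii n U) by auto. rewrite <- (H x t Hx Ht). reflexivity.
    + exists (fun t => c t / INR (S n)). intros x t Hx Ht.
      specialize (H x t Hx Ht). rewrite (lhs_iii_eq_lhs_ii n U) in H by auto.
      fold (lhs_ii (S (S n)) u x t).
      apply (Rmult_eq_reg_l (INR (S n))); [field_simplify; lra | exact HSn].
Qed.
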